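(* Let $m\ge1$, let $\Omega$ be a set with $|\Omega|=2^m$, and let $D:\Omega\to[0,1]$ satisfy $\sum_{y\in\Omega}D(y)\le1$. Let $H=\sum_{y\in\Omega}D(y)\log\frac1{D(y)}$. (i) If $H\ge1$, then $$\frac{\sum_{y\in\Omega}D(y)(\log D(y))^2}{H^2}\le\Big(1+\frac{\log(m+\log m+1.1)}{m}\Big)m = m+\log(m+\log m+1.1).$$ (ii) If $H\le1$ and $m\ge2$, then $$\sum_{y\in\Omega}D(y)(\log D(y))^2\le m+\log(m+\log m+2.5).$$
   Context: All logarithms are base 2, with the convention $0\log\frac10=0$ and $0\cdot(\log 0)^2=0$. *)

From HB Require Import structures.
From mathcomp Require Import all_boot all_order all_algebra.
From mathcomp Require Import all_classical all_reals.
From mathcomp Require Import exp.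
Set Implicit Arguments. Unset Strict Implicit. Unset Printing Implicit Defensive.
Import Order.TTheory GRing.Theory Num.Theory.
Local Open Scope ring_scope.

Definition log2 {R : realType} (x : R) : R := ln x / ln 2.

Definition entTerm {R : realType} (x : R) : R :=
  if x == 0 then 0 else x * log2 (x^-1).

Definition sqlogTerm {R : realType} (x : R) : R :=
  if x == 0 then 0 else x * (log2 x) ^+ 2.

Definition entropy {R : realType} {T : finType} (D : T -> R) : R :=
  \sum_(y : T) entTerm (D y).

Definition sqlogSum {R : realType} {T : finType} (D : T -> R) : R :=
  \sum_(y : T) sqlogTerm (D y).

From HB Require Import structures.
From mathcomp Require Import all_boot all_order all_algebra.
From mathcomp Require Import all_classical all_reals.
From mathcomp Require Import sequences exp.
From mathcomp Require Import ring lra.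

(* Write [D y = 2 ^ (- x)] with [x = log (1 / D y) >= 0]. Fix a threshold [x0]
   with [x0 ln 2 > 1] and put [d = x0 / (x0 ln 2 - 1)]. Two applications of
   [t <= exp (t - 1)], at [t = x / x0] and [t = (x - x0 + d) / d], give
   [2^-x x (x - (x0 - d)) <= x0 d 2^-x0] for every [x >= 0]. Summing over the
   [2^m] points, [sum D (log D)^2 <= (x0 - d) H + x0 d 2^(m - x0)]. Taking
   [x0 = m + log Q] turns the last term into [x0 d / Q], which is at most [d]
   when [x0 <= Q]; hence the bound is an affine function [a H + n] of the
   entropy with [n >= 0] and [a + n <= x0]. For [Q = m + log m + c] with
   [c > 1] one has [x0 <= Q], and both claims follow: [c = 1.1] with [H >= 1]
   (divide by [H^2]), and [c = 2.5] with [H <= 1], where [m >= 2] forces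
   [a >= 0]. *)

Set Implicit Arguments.
Unset Strict Implicit.
Unset Printing Implicit Defensive.

Import Order.TTheory GRing.Theory Num.Theory.
Local Open Scope ring_scope.

Section ElementaryBounds.
Variable R : realType.
Implicit Types x y : R.

Lemma ln_le_subr1 y : 0 < y -> ln y <= y - 1.
Proof.
move=> y0; have := @le_ln1Dx R (y - 1); rewrite [1 + _]addrC subrK.
by apply; lra.
Qed.

Lemma ln2_gt0 : 0 < ln (2 : R).
Proof. by apply: ln_gt0; lra. Qed.

Lemma ln2_ge_half : 1 / 2 <= ln (2 : R).
Proof. by have := @ln_le_subr1 (2^-1) ltac:(lra); rewrite lnV ?posrE //; lra. Qed.

Lemma log2M x y : 0 < x -> 0 < y -> log2 (x * y) = log2 x + log2 y.
Proof. by move=> x0 y0; rewrite /log2 lnM ?posrE // mulrDl. Qed.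

Lemma log2_expr (n : nat) : log2 (2 ^+ n : R) = n%:R.
Proof.
by rewrite /log2 lnXn // -[ln 2 *+ n]mulr_natl mulfK // gt_eqF //; exact: ln2_gt0.
Qed.

Lemma ler_log2 : {in Num.pos &, {mono @log2 R : x y / x <= y}}.
Proof.
by move=> x y x0 y0; rewrite /log2 ler_pM2r ?invr_gt0 ?ln2_gt0 // ler_ln.
Qed.

Lemma ltr_log2 : {in Num.pos &, {mono @log2 R : x y / x < y}}.
Proof.
by move=> x y x0 y0; rewrite /log2 ltr_pM2r ?invr_gt0 ?ln2_gt0 // ltr_ln.
Qed.

Lemma ler_natr_log2 (n : nat) x : 2 ^+ n <= x -> n%:R <= log2 x.
Proof.
move=> hx; have x_gt0 : 0 < x by apply: lt_le_trans hx; rewrite exprn_gt0.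
by rewrite -log2_expr ler_log2 ?posrE ?exprn_gt0.
Qed.

Lemma ltr_natr_log2 (n : nat) x : 2 ^+ n < x -> n%:R < log2 x.
Proof.
move=> hx; have x_gt0 : 0 < x by apply: le_lt_trans hx; rewrite exprn_ge0.
by rewrite -log2_expr ltr_log2 ?posrE ?exprn_gt0.
Qed.

Lemma log2_ge0 x : 1 <= x -> 0 <= log2 x.
Proof. by move=> x1; apply: divr_ge0; [exact: ln_ge0 | exact: ltW ln2_gt0]. Qed.

Lemma log2_natr_le (m : nat) : (1 <= m)%N -> log2 (m%:R : R) <= m%:R - 1.
Proof.
move=> m1; have mle : (m <= 2 ^ (m - 1))%N.
  by case: m m1 => // m _; rewrite subSS subn0 ltn_expl.
have -> : m%:R - 1 = (m - 1)%:R :> R by rewrite natrB.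
rewrite -(log2_expr (m - 1)) ler_log2 ?posrE ?exprn_gt0 ?ltr0n //.
by rewrite -natrX ler_nat.
Qed.

Lemma log2_1Dx_le x : 1 <= x -> log2 (1 + x) <= x.
Proof.
move=> x1; have ln2_ge := ln2_ge_half.
have -> : 1 + x = 2 * ((1 + x) / 2) by field.
rewrite log2M; [|lra|lra].
have := @ln_le_subr1 ((1 + x) / 2) ltac:(lra).
have k0 := ln2_gt0.
rewrite /log2 divff ?gt_eqF // => hln.
suff : ln ((1 + x) / 2) / ln 2 <= x - 1 by lra.
rewrite ler_pdivrMr //; nra.
Qed.

Lemma add_log2_shift_le (m : nat) x : (1 <= m)%N -> 1 <= x ->
  m%:R + log2 (m%:R + log2 (m%:R : R) + x) <= m%:R + log2 (m%:R : R) + x.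
Proof.
move=> m1 x1; have m1' : (1 : R) <= m%:R by rewrite ler1n.
have log2m_ge0 := log2_ge0 m1'; have log2m_le := log2_natr_le m1.
have Q_le : m%:R + log2 (m%:R : R) + x <= m%:R * (1 + x) by nra.
have := log2_1Dx_le x1.
rewrite -(ler_log2 _ _) ?posrE in Q_le; [|lra|nra].
rewrite log2M in Q_le; lra.
Qed.

Lemma mul_le_expR (u v a b : R) :
  0 <= u -> 0 <= v -> 0 < a -> 0 < b ->
  u * v <= a * b * expR (u / a + v / b - 2).
Proof.
move=> u0 v0 a0 b0.
have tangent (t : R) : t <= expR (t - 1).
  by have := expR_ge1Dx (t - 1); rewrite addrCA subrr addr0.
have := ler_pM (divr_ge0 u0 (ltW a0)) (divr_ge0 v0 (ltW b0))
  (tangent (u / a)) (tangent (v / b)).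
rewrite -expRD (_ : u / a - 1 + _ = u / a + v / b - 2); last by ring.
have -> : u * v = a * b * (u / a * (v / b)) by field; rewrite ?gt_eqF.
by rewrite ler_pM2l ?mulr_gt0.
Qed.

Lemma natr_exp2_mul_expR (m : nat) (Q : R) : 0 < Q ->
  (2 ^ m)%:R * expR (- (ln 2 * (m%:R + log2 Q))) = Q^-1.
Proof.
move=> Q0; rewrite natrX -{1}(@lnK _ 2) ?posrE // -expRM_natl -expRD.
rewrite (_ : _ + _ = - ln Q) ?expRN ?lnK ?posrE //.
by rewrite /log2; field; rewrite gt_eqF // ln2_gt0.
Qed.

End ElementaryBounds.

Section EntropyAffineBound.
Variables (R : realType) (x0 : R).
Hypothesis x0_ln2_gt1 : 1 < x0 * ln 2.

(* The choice of [d] makes [1 / x0 + 1 / d = ln 2], so that the exponent in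
   [mul_le_expR] becomes [ln 2 * (x - x0)] in [quadratic_le_expR]. *)
Let d := x0 / (x0 * ln 2 - 1).

Let x0_gt0 : 0 < x0.
Proof. by rewrite -(pmulr_lgt0 _ (ln2_gt0 R)) (lt_trans ltr01 x0_ln2_gt1). Qed.

Let d_gt0 : 0 < d.
Proof. by rewrite /d divr_gt0 // subr_gt0. Qed.

Let x0d_expR_ge0 (y : R) : 0 <= x0 * d * expR y.
Proof. by rewrite mulr_ge0 ?expR_ge0 // mulr_ge0 // ltW. Qed.

Lemma quadratic_le_expR (x : R) : 0 <= x ->
  x * (x - (x0 - d)) <= x0 * d * expR (ln 2 * (x - x0)).
Proof.
move=> x_ge0; have [hxa|hxa] := lerP (x - (x0 - d)) 0.
  exact: le_trans (mulr_ge0_le0 x_ge0 hxa) (x0d_expR_ge0 _).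
rewrite (_ : ln 2 * _ = x / x0 + (x - (x0 - d)) / d - 2).
  exact: mul_le_expR x_ge0 (ltW hxa) x0_gt0 d_gt0.
by rewrite /d; field; rewrite ?gt_eqF // subr_gt0.
Qed.

Lemma sqlogTerm_sub_entTerm_le (p : R) : 0 <= p <= 1 ->
  sqlogTerm p - (x0 - d) * entTerm p <= x0 * d * expR (- (ln 2 * x0)).
Proof.
move=> /andP[p_ge0 p_le1]; rewrite /sqlogTerm /entTerm.
case: eqP => [_|/eqP p_neq0]; first by rewrite mulr0 subr0.
have p_gt0 : 0 < p by rewrite lt0r p_neq0.
set x := log2 p^-1.
have x_ge0 : 0 <= x by apply: log2_ge0; rewrite invf_ge1.
have -> : log2 p = - x by rewrite /x /log2 lnV ?posrE // mulNr opprK.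
have p_expR : p * expR (ln 2 * (x - x0)) = expR (- (ln 2 * x0)).
  rewrite -{1}(@lnK _ p) ?posrE // -expRD; congr expR.
  by rewrite /x /log2 lnV ?posrE //; field; rewrite gt_eqF // ln2_gt0.
have -> : p * (- x) ^+ 2 - (x0 - d) * (p * x) = p * (x * (x - (x0 - d))) by ring.
apply: le_trans (ler_wpM2l p_ge0 (quadratic_le_expR x_ge0)) _.
by rewrite mulrCA p_expR.
Qed.

Lemma sqlogSum_le_entropy (T : finType) (D : T -> R) :
  (forall y, 0 <= D y <= 1) ->
  sqlogSum D <= (x0 - d) * entropy D + #|T|%:R * (x0 * d * expR (- (ln 2 * x0))).
Proof.
move=> hD; rewrite -lerBlDl /sqlogSum /entropy mulr_sumr -sumrB mulr_natl -sumr_const.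
by apply: ler_sum => y _; exact: sqlogTerm_sub_entTerm_le.
Qed.

Lemma sqlogSum_le_entropy_threshold (m : nat) (T : finType) (D : T -> R) (Q : R) :
  #|T| = (2 ^ m)%N -> (forall y, 0 <= D y <= 1) -> 0 < Q -> x0 = m%:R + log2 Q ->
  sqlogSum D <= (x0 - d) * entropy D + x0 * d / Q.
Proof.
move=> hT hD Q_gt0 x0E.
have card_expR : #|T|%:R * expR (- (ln 2 * x0)) = Q^-1.
  by rewrite hT x0E natr_exp2_mul_expR.
by have := sqlogSum_le_entropy hD; rewrite [_%:R * _]mulrCA card_expR.
Qed.

End EntropyAffineBound.

Lemma sqlogSum_affine_bound (R : realType) (m : nat) (T : finType) (D : T -> R)
    (x : R) :
  (1 <= m)%N -> 1 < x -> #|T| = (2 ^ m)%N -> (forall y, 0 <= D y <= 1) ->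
  let x0 := m%:R + log2 (m%:R + log2 (m%:R : R) + x) in
  exists a n : R, [/\ sqlogSum D <= a * entropy D + n, 0 <= n, a + n <= x0
                    & (2 <= x0 * ln 2 -> 0 <= a)].
Proof.
move=> m1 x1 hT hD x0.
pose Q := m%:R + log2 (m%:R : R) + x; have x0E : x0 = m%:R + log2 Q by [].
have m1' : (1 : R) <= m%:R by rewrite ler1n.
have Q_gt2 : 2 < Q by have := log2_ge0 m1'; rewrite /Q; lra.
have log2Q_gt1 : 1 < log2 Q.
  by rewrite -[1]mulr1n; apply: ltr_natr_log2; rewrite expr1.
have ln2_ge := @ln2_ge_half R.
have x0_gt2 : 2 < x0 by rewrite x0E; lra.
have x0_gt1 : 1 < x0 * ln 2 by nra.
have x0_le : x0 <= Q := add_log2_shift_le m1 (ltW x1).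
have Q_gt0 : 0 < Q by lra.
have := sqlogSum_le_entropy_threshold x0_gt1 hT hD Q_gt0 x0E.
set d := x0 / (x0 * ln 2 - 1) => hS.
have d_gt0 : 0 < d by rewrite divr_gt0 ?subr_gt0 //; lra.
exists (x0 - d), (x0 * d / Q); split => //.
- by apply/ltW/divr_gt0 => //; apply: mulr_gt0 => //; lra.
- suff : x0 * d / Q <= d by lra.
  by rewrite ler_pdivrMr // mulrC ler_pM2l.
- move=> x0_ge2; suff : d <= x0 by lra.
  rewrite ler_pdivrMr ?subr_gt0 //; nra.
Qed.

Lemma ler_div_sqr_of_affine (R : realFieldType) (S H a n c : R) :
  S <= a * H + n -> 0 <= n -> a + n <= c -> 0 <= c -> 1 <= H -> S / H ^+ 2 <= c.
Proof.
move=> hS n_ge0 ac c_ge0 H_ge1.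
have H2_ge1 : 1 <= H ^+ 2 by rewrite expr2; nra.
rewrite ler_pdivrMr; last by lra.
have [a_ge0|a_lt0] := lerP 0 a.
- have : a * H <= a * H ^+ 2 by rewrite ler_wpM2l // expr2; nra.
  have : (a + n) * H ^+ 2 <= c * H ^+ 2 by rewrite ler_wpM2r //; lra.
  nra.
- have : a * H <= a by nra.
  have : c <= c * H ^+ 2 by nra.
  lra.
Qed.

Theorem mainTheorem2 (R : realType) (m : nat) (T : finType) (D : T -> R) :
  (1 <= m)%N -> #|T| = (2 ^ m)%N ->
  (forall y, 0 <= D y <= 1) ->
  \sum_(y : T) D y <= 1 ->
  (1 <= entropy D ->
     sqlogSum D / (entropy D) ^+ 2
       <= (1 + log2 (m%:R + log2 (m%:R : R) + 11/10) / m%:R) * m%:R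
     /\ (1 + log2 (m%:R + log2 (m%:R : R) + 11/10) / m%:R) * m%:R
        = m%:R + log2 (m%:R + log2 (m%:R : R) + 11/10))
  /\
  (entropy D <= 1 -> (2 <= m)%N ->
     sqlogSum D <= m%:R + log2 (m%:R + log2 (m%:R : R) + 5/2)).
Proof.
move=> m_ge1 hT hD _.
have m_ge1' : (1 : R) <= m%:R by rewrite ler1n.
have log2m_ge0 := log2_ge0 m_ge1'.
split=> [H_ge1 | H_le1 m_ge2].
- have /= [a [n [hS n_ge0 ac _]]] :=
    @sqlogSum_affine_bound R m T D (11/10) m_ge1 ltac:(lra) hT hD.
  set Q := _ + 11/10 in ac *.
  have log2Q_ge0 : 0 <= log2 Q by apply: log2_ge0; rewrite /Q; lra.
  have x0E : (1 + log2 Q / m%:R) * m%:R = m%:R + log2 Q.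
    by field; rewrite gt_eqF //; lra.
  by rewrite x0E; split=> //; apply: ler_div_sqr_of_affine hS n_ge0 ac _ H_ge1; lra.
- have /= [a [n [hS n_ge0 ac a_ge0_of]]] :=
    @sqlogSum_affine_bound R m T D (5/2) m_ge1 ltac:(lra) hT hD.
  set Q := _ + 5/2 in ac a_ge0_of *.
  have m_ge2' : (2 : R) <= m%:R by rewrite ler_nat.
  have log2Q_ge2 : 2 <= log2 Q by apply: (@ler_natr_log2 R 2); rewrite /Q; lra.
  have ln2_ge := @ln2_ge_half R.
  have := a_ge0_of ltac:(nra); nra.
Qed.
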